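(* Let $T$ be a complete classical theory in a countable language. Then $\mathbf{G}_0(T)$ is a Polish open topological groupoid with base $\mathbf{B}_0(T)$, and if $g=\mathrm{tp}(a,b)\in\mathbf{G}_0(T)$ then $t_g=\mathrm{tp}(a)$ and $s_g=\mathrm{tp}(b)$.
   Context: $\mathbf{G}_0(T)\subseteq S_{2\times\mathbb{N}}(T)$ (the space of types of pairs of $\mathbb{N}$-indexed sequences, logic topology, subspace topology on $\mathbf{G}_0$) is the set of types $\mathrm{tp}(a,b)$ where $a$ and $b$ are both enumerations of the same countable model $M\models T$ (sequences whose set of entries is exactly $M$). $\mathbf{B}_0(T)$ is the subset defined by $x=y$, i.e. the types $\mathrm{tp}(a,a)$, identified with $\mathrm{tp}(a)$. Composition: $\mathrm{tp}(a,b)\cdot\mathrm{tp}(b,c)=\mathrm{tp}(a,c)$ (defined when the middle types agree), inverse $\mathrm{tp}(a,b)^{-1}=\mathrm{tp}(b,a)$; $s_g=g^{-1}g$, $t_g=gg^{-1}$. A topological groupoid is open if its source map is open onto the base. *)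

From Stdlib Require Import Reals.
From mathcomp Require Import ssreflect ssrfun ssrbool eqtype ssrnat fintype.
Unset Implicit Arguments.
Unset Strict Implicit.

Record language := Language {
  fsym : Type; far : fsym -> nat;
  rsym : Type; rar : rsym -> nat }.
Arguments far {l}.
Arguments rar {l}.

Definition countable_language (L : language) : Prop :=
  (exists e : fsym L -> nat, injective e) /\ (exists e : rsym L -> nat, injective e).

Inductive term (L : language) : Type :=
  | tvar : nat -> term L
  | tapp : forall f : fsym L, ('I_(far f) -> term L) -> term L.

Inductive formula (L : language) : Type :=
  | fequ : term L -> term L -> formula L
  | frel : forall r : rsym L, ('I_(rar r) -> term L) -> formula L
  | fneg : formula L -> formula L
  | fand : formula L -> formula L -> formula L
  | fex  : nat -> formula L -> formula L.

Arguments tvar {L}.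
Arguments tapp {L}.
Arguments fequ {L}.
Arguments frel {L}.
Arguments fneg {L}.
Arguments fand {L}.
Arguments fex {L}.

Record structure (L : language) := Structure {
  dom :> Type;
  dom_inh : dom;
  fint : forall f : fsym L, ('I_(far f) -> dom) -> dom;
  rint : forall r : rsym L, ('I_(rar r) -> dom) -> Prop }.
Arguments dom {L}.
Arguments fint {L}.
Arguments rint {L}.

Fixpoint teval {L : language} (M : structure L) (v : nat -> M) (t : term L) : M :=
  match t with
  | tvar n => v n
  | tapp f args => fint M f (fun i => teval M v (args i))
  end.

Definition upd {A : Type} (v : nat -> A) (n : nat) (m : A) : nat -> A :=
  fun k => if k == n then m else v k.

Fixpoint sat {L : language} (M : structure L) (v : nat -> M) (phi : formula L) : Prop :=
  match phi with
  | fequ t1 t2 => teval M v t1 = teval M v t2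
  | frel r args => rint M r (fun i => teval M v (args i))
  | fneg psi => ~ sat M v psi
  | fand psi chi => sat M v psi /\ sat M v chi
  | fex n psi => exists m : M, sat M (upd v n m) psi
  end.

Fixpoint tfree {L : language} (n : nat) (t : term L) : Prop :=
  match t with
  | tvar k => k = n
  | tapp f args => exists i, tfree n (args i)
  end.

Fixpoint ffree {L : language} (n : nat) (phi : formula L) : Prop :=
  match phi with
  | fequ t1 t2 => tfree n t1 \/ tfree n t2
  | frel r args => exists i, tfree n (args i)
  | fneg psi => ffree n psi
  | fand psi chi => ffree n psi \/ ffree n chi
  | fex k psi => k <> n /\ ffree n psi
  end.

Definition sentence {L : language} (phi : formula L) : Prop := forall n, ~ ffree n phi.

Definition theory (L : language) := formula L -> Prop.

Definition is_model {L : language} (M : structure L) (T : theory L) : Prop :=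
  forall phi, T phi -> forall v : nat -> M, sat M v phi.

Definition complete_theory {L : language} (T : theory L) : Prop :=
  (forall phi, T phi -> sentence phi) /\
  (exists M : structure L, is_model M T) /\
  (forall phi, sentence phi ->
     (forall M : structure L, is_model M T -> forall v : nat -> M, sat M v phi) \/
     (forall M : structure L, is_model M T -> forall v : nat -> M, ~ sat M v phi)).

(** Types are sets of formulas; the variables x_i, y_i are coded as
    the variables 2i and 2i+1. *)
Definition ftype (L : language) := formula L -> Prop.

Definition pairseq {A : Type} (a b : nat -> A) : nat -> A :=
  fun n => if odd n then b n./2 else a n./2.

Definition tp2 {L : language} (M : structure L) (a b : nat -> M) : ftype L :=
  fun phi => sat M (pairseq a b) phi.

Definition enumeration {A : Type} (a : nat -> A) : Prop := forall m : A, exists i, a i = m.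

Definition G0 {L : language} (T : theory L) (p : ftype L) : Prop :=
  exists (M : structure L) (a b : nat -> M),
    is_model M T /\ enumeration a /\ enumeration b /\ p = tp2 M a b.

Definition B0 {L : language} (T : theory L) (p : ftype L) : Prop :=
  G0 T p /\ forall i, p (fequ (tvar i.*2) (tvar i.*2.+1)).

Section Topology.
Context {L : language}.
Notation X := (ftype L).

(** U is open in the subspace S of the type space: union of basic sets [phi] ∩ S *)
Definition lopen (S U : X -> Prop) : Prop :=
  (forall p, U p -> S p) /\
  (forall p, U p -> exists phi, p phi /\ forall q, S q -> q phi -> U q).

Definition lopen2 (D W : X -> X -> Prop) : Prop :=
  (forall p q, W p q -> D p q) /\
  (forall p q, W p q -> exists phi psi, p phi /\ q psi /\
      forall p' q', D p' q' -> p' phi -> q' psi -> W p' q').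

Definition continuous_on (S S' : X -> Prop) (f : X -> X) : Prop :=
  (forall p, S p -> S' (f p)) /\
  (forall U, lopen S' U -> lopen S (fun p => S p /\ U (f p))).

Local Open Scope R_scope.

Definition metric_on (S : X -> Prop) (d : X -> X -> R) : Prop :=
  (forall p q, S p -> S q -> 0 <= d p q) /\
  (forall p q, S p -> S q -> (d p q = 0 <-> p = q)) /\
  (forall p q, S p -> S q -> d p q = d q p) /\
  (forall p q r, S p -> S q -> S r -> d p r <= d p q + d q r).

Definition metric_open (S : X -> Prop) (d : X -> X -> R) (U : X -> Prop) : Prop :=
  (forall p, U p -> S p) /\
  (forall p, U p -> exists e, 0 < e /\ forall q, S q -> d p q < e -> U q).

Definition cauchy (d : X -> X -> R) (x : nat -> X) : Prop :=
  forall e, 0 < e -> exists N, forall m n, (N <= m)%N -> (N <= n)%N -> d (x m) (x n) < e.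

Definition converges_to (d : X -> X -> R) (x : nat -> X) (l : X) : Prop :=
  forall e, 0 < e -> exists N, forall n, (N <= n)%N -> d (x n) l < e.

Definition polish (S : X -> Prop) : Prop :=
  (exists d : X -> X -> R,
     metric_on S d /\
     (forall U, lopen S U <-> metric_open S d U) /\
     (forall x : nat -> X, (forall n, S (x n)) -> cauchy d x ->
        exists l, S l /\ converges_to d x l)) /\
  (exists s : nat -> X, (forall n, S (s n)) /\
     forall U, lopen S U -> (exists p, U p) -> exists n, U (s n)).

(** * (Open topological) groupoids, arrows-only presentation:
    G the set of arrows, B ⊆ G the base (units), mul the partial
    composition (meaningful on composable pairs), inv the inverse;
    s_g = g^{-1} g and t_g = g g^{-1}. *)
Variables (G B : X -> Prop) (mul : X -> X -> X) (inv : X -> X).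

Definition src (g : X) : X := mul (inv g) g.
Definition tgt (g : X) : X := mul g (inv g).
Definition composable (g h : X) : Prop := G g /\ G h /\ src g = tgt h.

Definition is_groupoid : Prop :=
  (forall u, B u -> G u) /\
  (forall g, G g -> G (inv g)) /\
  (forall g h, composable g h -> G (mul g h)) /\
  (forall g, G g -> B (src g) /\ B (tgt g)) /\
  (forall u, B u -> src u = u /\ tgt u = u) /\
  (forall g, G g -> inv (inv g) = g) /\
  (forall g, G g -> mul (tgt g) g = g /\ mul g (src g) = g) /\
  (forall g h, composable g h -> src (mul g h) = src h /\ tgt (mul g h) = tgt g) /\
  (forall g h k, composable g h -> composable h k ->
     mul (mul g h) k = mul g (mul h k)).

Definition is_topological_groupoid : Prop :=
  is_groupoid /\
  continuous_on G G inv /\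
  continuous_on G B src /\
  continuous_on G B tgt /\
  (forall U, lopen G U ->
     lopen2 composable (fun g h => composable g h /\ U (mul g h))).

Definition is_open_topological_groupoid : Prop :=
  is_topological_groupoid /\
  (forall U, lopen G U -> lopen B (fun u => exists g, U g /\ src g = u)).

End Topology.

(* A type tp(a, b) in G0(T) determines the pair (a, b) up to isomorphism, and an
   enumeration b determines c from tp(b, c); this makes tp(a, b) . tp(b, c) = tp(a, c)
   well defined.  Inverse, source and target act on types by renaming variables, hence
   are continuous.  For composition and for openness of the source, a neighbourhood
   [phi(x, z)] of tp(a, c) is pulled back by recording in tp(a, b) which y_(sigma i)
   equals each x_i, and substituting.
   G0(T) is Polish for the ultrametric 1/(n+1), n the first stage at which two types
   differ on the n-th formula or on the least Henkin witness of the n-th existential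
   requirement: along a Cauchy sequence these witnesses stabilise, so the limit type is
   Henkin on both sides and is realised by a pair of enumerations of its term model.
   Completeness of T is used only through T being a set of sentences with a model; a
   downward Loewenheim-Skolem construction in that model makes G0(T) nonempty. *)

From Stdlib Require Import Reals Lra Classical ClassicalEpsilon FunctionalExtensionality.
From Stdlib Require Import PropExtensionality ProofIrrelevance Cantor Wf_nat.
From mathcomp Require Import ssreflect ssrfun ssrbool eqtype ssrnat seq choice fintype bigop.
From mathcomp Require Import zify.
From Pilot Require Import Defs.

Section Syntax.
Context {L : language}.
Implicit Types (M : structure L) (t : term L) (phi psi : formula L) (rho : nat -> nat).

Lemma eq_teval_free M (v v' : nat -> M) t :
  (forall k, tfree k t -> v k = v' k) -> teval M v t = teval M v' t.
Proof.
elim: t => [n|f args IH] /= H; first exact: H.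
congr (fint M f); apply: functional_extensionality => i.
by apply: IH => k Hk; apply: H; exists i.
Qed.

Lemma eq_sat_free M phi : forall v v' : nat -> M,
  (forall k, ffree k phi -> v k = v' k) -> (sat M v phi <-> sat M v' phi).
Proof.
elim: phi => [t1 t2|r args|psi IH|psi1 IH1 psi2 IH2|n psi IH] v v' H /=.
- by rewrite (eq_teval_free _ v v' t1) ?(eq_teval_free _ v v' t2) //
    => k Hk; apply: H; [right|left].
- have -> // : (fun i => teval M v (args i)) = (fun i => teval M v' (args i)).
  apply: functional_extensionality => i.
  by apply: eq_teval_free => k Hk; apply: H; exists i.
- by rewrite (IH v v').
- by rewrite (IH1 v v') ?(IH2 v v') // => k Hk; apply: H; [right|left].
- have Hupd m : sat M (upd v n m) psi <-> sat M (upd v' n m) psi.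
    apply: IH => k Hk; rewrite /upd; case: eqP => // /eqP Hkn.
    by apply: H; split=> // Ekn; rewrite Ekn eqxx in Hkn.
  by split=> -[m Hm]; exists m; apply/Hupd.
Qed.

Lemma comp_upd {A B : Type} (f : A -> B) (v : nat -> A) n a :
  f \o upd v n a = upd (f \o v) n (f a).
Proof. by apply: functional_extensionality => k; rewrite /upd /=; case: eqP. Qed.

Fixpoint tbound t : nat :=
  match t with
  | tvar n => n.+1
  | tapp f args => \max_(i < far f) tbound (args i)
  end.

Fixpoint fbound phi : nat :=
  match phi with
  | fequ t1 t2 => maxn (tbound t1) (tbound t2)
  | frel r args => \max_(i < rar r) tbound (args i)
  | fneg psi => fbound psi
  | fand psi chi => maxn (fbound psi) (fbound chi)
  | fex _ psi => fbound psi
  end.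

Lemma tbound_free {k t} : tfree k t -> k < tbound t.
Proof.
elim: t => [n|f args IH] /=; first by move->.
by case=> i /IH Hi; apply: leq_trans Hi (leq_bigmax i).
Qed.

Lemma fbound_free {k phi} : ffree k phi -> k < fbound phi.
Proof.
elim: phi => [t1 t2|r args|psi IH|psi1 IH1 psi2 IH2|n psi IH] /=.
- by case=> /tbound_free Hk; apply: leq_trans Hk _; rewrite ?leq_maxl ?leq_maxr.
- by case=> i /tbound_free Hk; apply: leq_trans Hk (leq_bigmax i).
- exact: IH.
- by case=> [/IH1|/IH2] Hk; apply: leq_trans Hk _; rewrite ?leq_maxl ?leq_maxr.
- by case=> _ /IH.
Qed.

Fixpoint trename rho t : term L :=
  match t with
  | tvar n => tvar (rho n)
  | tapp f args => tapp f (fun i => trename rho (args i))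
  end.

Definition fresh rho phi : nat := (\max_(k < fbound phi) rho k).+1.

Lemma fresh_free rho phi k : ffree k phi -> rho k < fresh rho phi.
Proof.
by move/fbound_free=> Hk; rewrite ltnS (leq_bigmax (Ordinal Hk)).
Qed.

Fixpoint rename rho phi : formula L :=
  match phi with
  | fequ t1 t2 => fequ (trename rho t1) (trename rho t2)
  | frel r args => frel r (fun i => trename rho (args i))
  | fneg psi => fneg (rename rho psi)
  | fand psi chi => fand (rename rho psi) (rename rho chi)
  | fex n psi => let N := fresh rho psi in fex N (rename (upd rho n N) psi)
  end.

Lemma teval_trename M (v : nat -> M) rho t :
  teval M v (trename rho t) = teval M (v \o rho) t.
Proof.
elim: t => [n|f args IH] //=.
by congr (fint M f); apply: functional_extensionality => i; apply: IH.
Qed.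

Lemma upd_comp_fresh M (v : nat -> M) rho n m psi k : ffree k psi ->
  (upd v (fresh rho psi) m \o upd rho n (fresh rho psi)) k = upd (v \o rho) n m k.
Proof.
move=> Hk; rewrite /upd /=; case: (k =P n) => _; first by rewrite eqxx.
by rewrite ltn_eqF // fresh_free.
Qed.

Lemma sat_rename M phi : forall (v : nat -> M) rho,
  sat M v (rename rho phi) <-> sat M (v \o rho) phi.
Proof.
elim: phi => [t1 t2|r args|psi IH|psi1 IH1 psi2 IH2|n psi IH] v rho /=.
- by rewrite !teval_trename.
- suff -> : (fun i => teval M v (trename rho (args i))) =
            (fun i => teval M (v \o rho) (args i)) by [].
  by apply: functional_extensionality => i; apply: teval_trename.
- by rewrite IH.
- by rewrite IH1 IH2.
- have Hm m : sat M (upd v (fresh rho psi) m) (rename (upd rho n (fresh rho psi)) psi)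
      <-> sat M (upd (v \o rho) n m) psi.
    by rewrite IH; apply: eq_sat_free => k; apply: upd_comp_fresh.
  by split=> -[m Hsat]; exists m; apply/Hm.
Qed.

Lemma sat_rename_upd_fresh M (v : nat -> M) rho n i psi :
  sat M v (rename (upd id (fresh rho psi) i) (rename (upd rho n (fresh rho psi)) psi))
  <-> sat M v (rename (upd rho n i) psi).
Proof.
rewrite !sat_rename (comp_upd v id) (comp_upd v rho).
by apply: eq_sat_free => k; apply: upd_comp_fresh.
Qed.

Definition ftrue : formula L := fequ (tvar 0) (tvar 0).
Definition fimp phi psi : formula L := fneg (fand phi (fneg psi)).

Definition bigfand {n} (F : 'I_n -> formula L) : formula L :=
  foldr (fun i acc => fand (F i) acc) ftrue (enum 'I_n).

Lemma bigfand_ind (P : formula L -> Prop) {n} (F : 'I_n -> formula L) :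
  P ftrue -> (forall phi psi, P (fand phi psi) <-> P phi /\ P psi) ->
  (P (bigfand F) <-> forall i, P (F i)).
Proof.
move=> Ptrue Pand; rewrite /bigfand.
suff -> : forall s : seq 'I_n,
    P (foldr (fun i acc => fand (F i) acc) ftrue s) <-> forall i, i \in s -> P (F i).
  by split=> H i; [apply: H; rewrite mem_enum | move=> _; apply: H].
elim=> [|j s IH] /=; first by split.
rewrite Pand IH; split=> [[Hj Hs] i|H].
- by rewrite in_cons => /orP [/eqP ->|/Hs].
- by split=> [|i Hi]; apply: H; rewrite in_cons ?eqxx ?Hi ?orbT.
Qed.

Lemma sat_bigfand M (v : nat -> M) {n} (F : 'I_n -> formula L) :
  sat M v (bigfand F) <-> forall i, sat M v (F i).
Proof. exact: (bigfand_ind (sat M v)). Qed.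

End Syntax.

Lemma pairseq_even {A} (a b : nat -> A) i : pairseq a b i.*2 = a i.
Proof. by rewrite /pairseq odd_double doubleK. Qed.

Lemma pairseq_odd {A} (a b : nat -> A) i : pairseq a b i.*2.+1 = b i.
Proof. by rewrite /pairseq /= odd_double uphalf_double. Qed.

Lemma parity_ind (P : nat -> Prop) :
  (forall i, P i.*2) -> (forall i, P i.*2.+1) -> forall k, P k.
Proof.
move=> Peven Podd k; rewrite -(odd_double_half k).
by case: (odd k); [apply: Podd | apply: Peven].
Qed.

Lemma comp_pairseq {A B} (h : A -> B) (a b : nat -> A) :
  h \o pairseq a b = pairseq (h \o a) (h \o b).
Proof. by apply: functional_extensionality => k; rewrite /pairseq /=; case: odd. Qed.

Lemma enumeration_pairseq {A} (a b : nat -> A) :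
  enumeration a -> enumeration (pairseq a b).
Proof. by move=> Ea m; have [i <-] := Ea m; exists i.*2; rewrite pairseq_even. Qed.

Lemma enumeration_factor {A} {b : nat -> A} (a : nat -> A) :
  enumeration b -> exists sigma : nat -> nat, b \o sigma = a.
Proof.
move=> Eb; exists (fun i => proj1_sig (constructive_indefinite_description _ (Eb (a i)))).
by apply: functional_extensionality => i /=; case: (constructive_indefinite_description _ _).
Qed.

Lemma enumeration_prefix {A} {b : nat -> A} (a : nat -> A) n :
  enumeration b -> enumeration (fun i => if i < n then a i else b (i - n)).
Proof. by move=> Eb m; have [j <-] := Eb m; exists (j + n); rewrite ltnNge leq_addl addnK. Qed.

Definition swap_xy (k : nat) : nat := if odd k then k.-1 else k.+1.
Definition copy_x (k : nat) : nat := (k./2).*2.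
Definition copy_y (k : nat) : nat := (k./2).*2.+1.
Definition reindex_x (sigma : nat -> nat) (k : nat) : nat :=
  if odd k then k else (sigma k./2).*2.

Section Reindexing.
Context {A : Type} (a b : nat -> A).

Lemma pairseq_swap_xy : pairseq a b \o swap_xy = pairseq b a.
Proof.
apply: functional_extensionality; apply: parity_ind => i;
  by rewrite /= /swap_xy /= odd_double /= ?pairseq_even ?pairseq_odd.
Qed.

Lemma pairseq_copy_x : pairseq a b \o copy_x = pairseq a a.
Proof.
apply: functional_extensionality; apply: parity_ind => i;
  by rewrite /copy_x /= ?doubleK ?uphalf_double ?pairseq_even ?pairseq_odd.
Qed.

Lemma pairseq_copy_y : pairseq a b \o copy_y = pairseq b b.
Proof.
apply: functional_extensionality; apply: parity_ind => i;
  by rewrite /copy_y /= ?doubleK ?uphalf_double ?pairseq_odd ?pairseq_even.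
Qed.

Lemma pairseq_reindex_x sigma : pairseq a b \o reindex_x sigma = pairseq (a \o sigma) b.
Proof.
apply: functional_extensionality; apply: parity_ind => i;
  by rewrite /= /reindex_x /= odd_double /= ?doubleK ?pairseq_even ?pairseq_odd.
Qed.

End Reindexing.

Section Isomorphism.
Context {L : language}.
Implicit Types (M : structure L) (phi : formula L).

Record iso {M M'} (h : M -> M') : Prop := Iso {
  iso_inj : injective h;
  iso_surj : forall m', exists m, h m = m';
  iso_fint : forall f ds, h (fint M f ds) = fint M' f (h \o ds);
  iso_rint : forall r ds, rint M r ds <-> rint M' r (h \o ds) }.
Arguments iso_inj {M M' h}.
Arguments iso_surj {M M' h}.
Arguments iso_rint {M M' h}.

Lemma teval_iso {M M'} {h : M -> M'} (u : nat -> M) t :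
  iso h -> teval M' (h \o u) t = h (teval M u t).
Proof.
move=> [_ _ Hf _]; elim: t => [n|f args IH] //=.
by rewrite Hf; congr (fint M' f); apply: functional_extensionality => i; apply: IH.
Qed.

Lemma sat_iso {M M'} {h : M -> M'} phi : iso h ->
  forall u : nat -> M, sat M u phi <-> sat M' (h \o u) phi.
Proof.
move=> Hh; elim: phi => [t1 t2|r args|psi IH|psi1 IH1 psi2 IH2|n psi IH] u /=.
- by rewrite !teval_iso //; split=> [->|/(iso_inj Hh)].
- rewrite (iso_rint Hh); suff -> : h \o (fun i => teval M u (args i)) =
    (fun i => teval M' (h \o u) (args i)) by [].
  by apply: functional_extensionality => i; rewrite /= teval_iso.
- by rewrite IH.
- by rewrite IH1 IH2.
- split=> -[m Hm].
  + by exists (h m); rewrite -comp_upd -IH.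
  + by have [m0 Em] := iso_surj Hh m; exists m0; rewrite IH comp_upd Em.
Qed.

Lemma enumeration_iso {M M'} {h : M -> M'} {x : nat -> M} :
  iso h -> enumeration x -> enumeration (h \o x).
Proof. by move=> Hh Ex m'; have [m <-] := iso_surj Hh m'; have [i <-] := Ex m; exists i. Qed.

(* [v k |-> v' k] is a well-defined isomorphism since [v] and [v'] satisfy the same
   atomic formulas. *)
Lemma enumerated_iso {M M'} {v : nat -> M} {v' : nat -> M'} :
  enumeration v -> enumeration v' -> (forall phi, sat M v phi <-> sat M' v' phi) ->
  exists h : M -> M', iso h /\ h \o v = v'.
Proof.
move=> Ev Ev' Hsat.
pose idx m := proj1_sig (constructive_indefinite_description _ (Ev m)).
have idxK m : v (idx m) = m.
  by rewrite /idx; case: (constructive_indefinite_description _ _).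
have Heq i j : v i = v j <-> v' i = v' j by apply: (Hsat (fequ (tvar i) (tvar j))).
have idx_args n (ds : 'I_n -> M) : (fun i => v (idx (ds i))) = ds.
  by apply: functional_extensionality => i; rewrite idxK.
pose h m := v' (idx m).
have hv : h \o v = v'.
  by apply: functional_extensionality => k; apply/Heq; rewrite idxK.
exists h; split=> //; split.
- by move=> x y /Heq; rewrite !idxK.
- by move=> m'; have [k <-] := Ev' m'; exists (v k); rewrite -hv.
- move=> f ds.
  have := Hsat (fequ (tvar (idx (fint M f ds))) (tapp f (fun i => tvar (idx (ds i))))).
  by rewrite /= idxK idx_args => -[+ _]; apply.
- by move=> r ds; have := Hsat (frel r (fun i => tvar (idx (ds i)))); rewrite /= idx_args.
Qed.

Lemma tp2_iso {M M'} {h : M -> M'} (a b : nat -> M) :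
  iso h -> tp2 M a b = tp2 M' (h \o a) (h \o b).
Proof.
move=> Hh; apply: functional_extensionality => phi; apply: propositional_extensionality.
by rewrite /tp2 (sat_iso phi Hh) comp_pairseq.
Qed.

Lemma tp2_transport {M1 M2} {a1 b1 : nat -> M1} {a2 b2 : nat -> M2} :
  enumeration a1 -> enumeration a2 -> tp2 M1 a1 b1 = tp2 M2 a2 b2 ->
  exists h : M2 -> M1, iso h /\ h \o a2 = a1 /\ h \o b2 = b1.
Proof.
move=> Ea1 Ea2 Htp.
have Hsat phi : sat M2 (pairseq a2 b2) phi <-> sat M1 (pairseq a1 b1) phi.
  by rewrite -[sat M2 _ _]/(tp2 M2 a2 b2 phi) -Htp.
have [h [Hh Hv]] :=
  enumerated_iso (enumeration_pairseq _ b2 Ea2) (enumeration_pairseq _ b1 Ea1) Hsat.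
exists h; rewrite comp_pairseq in Hv; split=> //.
split; apply: functional_extensionality => i.
- by have := equal_f Hv i.*2; rewrite !pairseq_even.
- by have := equal_f Hv i.*2.+1; rewrite !pairseq_odd.
Qed.

(* [c j] is the [b k] such that [x_k = y_j] belongs to [tp(b, c)]. *)
Lemma tp2_injr {M} {b c c' : nat -> M} :
  enumeration b -> tp2 M b c = tp2 M b c' -> c = c'.
Proof.
move=> Eb Htp; apply: functional_extensionality => j.
have [k Hk] := Eb (c j).
have := equal_f Htp (fequ (tvar k.*2) (tvar j.*2.+1)).
by rewrite /tp2 /= !pairseq_even !pairseq_odd Hk => <-.
Qed.

End Isomorphism.

Section Groupoid.
Context {L : language} (T : theory L).
Implicit Types (M : structure L) (p q g h u : ftype L).

Definition tpmul p q : ftype L := fun phi =>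
  exists M (a b c : nat -> M), is_model M T /\
    enumeration a /\ enumeration b /\ enumeration c /\
    p = tp2 M a b /\ q = tp2 M b c /\ tp2 M a c phi.

Definition tpinv p : ftype L := fun phi =>
  exists M (a b : nat -> M), is_model M T /\ enumeration a /\ enumeration b /\
    p = tp2 M a b /\ tp2 M b a phi.

Notation src := (src tpmul tpinv).
Notation tgt := (tgt tpmul tpinv).
Notation composable := (composable (G0 T) tpmul tpinv).

Lemma G0_tp2 M (a b : nat -> M) :
  is_model M T -> enumeration a -> enumeration b -> G0 T (tp2 M a b).
Proof. by move=> HM Ea Eb; exists M, a, b. Qed.

Lemma tpmul_tp2 M (a b c : nat -> M) : is_model M T ->
  enumeration a -> enumeration b -> enumeration c ->
  tpmul (tp2 M a b) (tp2 M b c) = tp2 M a c.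
Proof.
move=> HM Ea Eb Ec; apply: functional_extensionality => phi.
apply: propositional_extensionality; split; last by move=> H; exists M, a, b, c.
case=> M' [a' [b' [c' [_ [Ea' [_ [_ [Eab [Ebc Hphi]]]]]]]]].
have [h [Hh [Ha Hb]]] := tp2_transport Ea Ea' Eab; subst a b.
rewrite (tp2_iso b' c' Hh) in Ebc; rewrite (tp2_iso a' c' Hh) in Hphi.
by rewrite (tp2_injr Eb Ebc).
Qed.

Lemma tpinv_tp2 M (a b : nat -> M) : is_model M T ->
  enumeration a -> enumeration b -> tpinv (tp2 M a b) = tp2 M b a.
Proof.
move=> HM Ea Eb; apply: functional_extensionality => phi.
apply: propositional_extensionality; split; last by move=> H; exists M, a, b.
case=> M' [a' [b' [_ [Ea' [_ [Eab Hphi]]]]]].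
have [h [Hh [Ha Hb]]] := tp2_transport Ea Ea' Eab; subst a b.
by rewrite (tp2_iso _ _ Hh) in Hphi.
Qed.

Lemma src_tp2 M (a b : nat -> M) : is_model M T ->
  enumeration a -> enumeration b -> src (tp2 M a b) = tp2 M b b.
Proof. by move=> HM Ea Eb; rewrite /Defs.src tpinv_tp2 // tpmul_tp2. Qed.

Lemma tgt_tp2 M (a b : nat -> M) : is_model M T ->
  enumeration a -> enumeration b -> tgt (tp2 M a b) = tp2 M a a.
Proof. by move=> HM Ea Eb; rewrite /Defs.tgt tpinv_tp2 // tpmul_tp2. Qed.

Lemma composable_tp2 {g h} : composable g h ->
  exists M (a b c : nat -> M), is_model M T /\
    enumeration a /\ enumeration b /\ enumeration c /\ g = tp2 M a b /\ h = tp2 M b c.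
Proof.
case=> [[M [a [b [HM [Ea [Eb ->]]]]]] [[M' [b' [c' [HM' [Eb' [Ec' ->]]]]]]]].
rewrite src_tp2 // tgt_tp2 // => Ebb.
have [k [Hk [Hb _]]] := tp2_transport Eb Eb' Ebb.
exists M, a, b, (k \o c'); do !split=> //; first exact: enumeration_iso.
by rewrite (tp2_iso _ _ Hk) Hb.
Qed.

Lemma B0_tp2 M (b : nat -> M) : is_model M T -> enumeration b -> B0 T (tp2 M b b).
Proof.
by move=> HM Eb; split=> [|i]; [apply: G0_tp2 | rewrite /tp2 /= pairseq_even pairseq_odd].
Qed.

Lemma B0_diag {u} : B0 T u ->
  exists M (b : nat -> M), is_model M T /\ enumeration b /\ u = tp2 M b b.
Proof.
case=> -[M [a [b [HM [Ea [Eb ->]]]]]] Hdiag; exists M, b; do 2!split=> //.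
suff -> : a = b by [].
apply: functional_extensionality => i.
by have := Hdiag i; rewrite /tp2 /= pairseq_even pairseq_odd.
Qed.

Lemma G0_groupoid : is_groupoid (G0 T) (B0 T) tpmul tpinv.
Proof.
split; first by move=> u [].
split; first by move=> g [M [a [b [HM [Ea [Eb ->]]]]]]; rewrite tpinv_tp2 //; apply: G0_tp2.
split.
  move=> g h /composable_tp2 [M [a [b [c [HM [Ea [Eb [Ec [-> ->]]]]]]]]].
  by rewrite tpmul_tp2 //; apply: G0_tp2.
split.
  move=> g [M [a [b [HM [Ea [Eb ->]]]]]].
  by rewrite src_tp2 // tgt_tp2 //; split; apply: B0_tp2.
split; first by move=> u /B0_diag [M [b [HM [Eb ->]]]]; rewrite src_tp2 // tgt_tp2.
split; first by move=> g [M [a [b [HM [Ea [Eb ->]]]]]]; rewrite !tpinv_tp2.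
split; first by move=> g [M [a [b [HM [Ea [Eb ->]]]]]]; rewrite src_tp2 // tgt_tp2 // !tpmul_tp2.
split.
  move=> g h /composable_tp2 [M [a [b [c [HM [Ea [Eb [Ec [-> ->]]]]]]]]].
  by rewrite tpmul_tp2 // !src_tp2 // !tgt_tp2.
move=> g h k /composable_tp2 [M [a [b [c [HM [Ea [Eb [Ec [-> ->]]]]]]]]].
move=> /composable_tp2 [M' [b' [c' [d' [_ [Eb' [_ [Ed' [Ebc ->]]]]]]]]].
have [j [Hj [Hb Hc]]] := tp2_transport Eb Eb' Ebc; subst b c.
have Ed := enumeration_iso Hj Ed'.
by rewrite (tp2_iso _ _ Hj) !tpmul_tp2.
Qed.

End Groupoid.

Section Topology.
Context {L : language} (T : theory L).
Implicit Types (M : structure L) (S : ftype L -> Prop).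

Notation src := (src (tpmul T) (tpinv T)).
Notation tgt := (tgt (tpmul T) (tpinv T)).
Notation composable := (composable (G0 T) (tpmul T) (tpinv T)).

Lemma tp2_rename M (a b : nat -> M) rho phi :
  tp2 M a b (rename rho phi) <-> sat M (pairseq a b \o rho) phi.
Proof. exact: sat_rename. Qed.

Lemma tp2_eq_free_x M (a a' b : nat -> M) phi :
  (forall i, i < fbound phi -> a i = a' i) -> tp2 M a b phi -> tp2 M a' b phi.
Proof.
move=> Haa'; apply: (proj1 (eq_sat_free _ _ _ _ _)); apply: parity_ind => i Hi.
  rewrite !pairseq_even Haa' //; have := fbound_free Hi; lia.
by rewrite !pairseq_odd.
Qed.

Lemma continuous_on_rename rho S S' (F : ftype L -> ftype L) :
  (forall p, S p -> S' (F p)) ->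
  (forall p, S p -> forall phi, F p phi <-> p (rename rho phi)) ->
  continuous_on S S' F.
Proof.
move=> SF HF; split=> // U [US' Ubasic]; split=> [p []//|p [Sp Up]].
have [phi [Hphi HU]] := Ubasic _ Up.
exists (rename rho phi); split; first by rewrite -HF.
by move=> q Sq Hq; split=> //; apply: HU; [apply: SF | rewrite HF].
Qed.

Lemma continuous_tpinv : continuous_on (G0 T) (G0 T) (tpinv T).
Proof.
apply: (continuous_on_rename swap_xy).
  by move=> g Gg; have [_ [+ _]] := G0_groupoid T; apply.
move=> g [M [a [b [HM [Ea [Eb ->]]]]]] phi.
by rewrite tpinv_tp2 // tp2_rename pairseq_swap_xy.
Qed.

Lemma continuous_src : continuous_on (G0 T) (B0 T) src.
Proof.
apply: (continuous_on_rename copy_y).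
  by move=> g Gg; have [_ [_ [_ [+ _]]]] := G0_groupoid T; case/(_ g Gg).
move=> g [M [a [b [HM [Ea [Eb ->]]]]]] phi.
by rewrite src_tp2 // tp2_rename pairseq_copy_y.
Qed.

Lemma continuous_tgt : continuous_on (G0 T) (B0 T) tgt.
Proof.
apply: (continuous_on_rename copy_x).
  by move=> g Gg; have [_ [_ [_ [+ _]]]] := G0_groupoid T; case/(_ g Gg).
move=> g [M [a [b [HM [Ea [Eb ->]]]]]] phi.
by rewrite tgt_tp2 // tp2_rename pairseq_copy_x.
Qed.

Lemma continuous_tpmul U : lopen (G0 T) U ->
  lopen2 composable (fun g h => composable g h /\ U (tpmul T g h)).
Proof.
move=> [UG Ubasic]; split=> [g h []//|g h [Hgh Ugh]].
have [M [a [b [c [HM [Ea [Eb [Ec [Eg Eh]]]]]]]]] := composable_tp2 T Hgh; subst g h.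
rewrite tpmul_tp2 // in Ugh; have [phi [Hphi HU]] := Ubasic _ Ugh.
have [sigma Hsigma] := enumeration_factor a Eb.
exists (bigfand (fun i : 'I_(fbound phi) => fequ (tvar i.*2) (tvar (sigma i).*2.+1))).
exists (rename (reindex_x sigma) phi); split; [|split].
- by apply/sat_bigfand => i /=; rewrite pairseq_even pairseq_odd -Hsigma.
- by rewrite tp2_rename pairseq_reindex_x Hsigma.
- move=> g' h' Hgh' Hg' Hh'; split=> //.
  have [M' [a' [b' [c' [HM' [Ea' [Eb' [Ec' [Eg Eh]]]]]]]]] := composable_tp2 T Hgh'.
  subst g' h'.
  rewrite tpmul_tp2 //; apply: HU; first exact: G0_tp2.
  move: Hh'; rewrite tp2_rename pairseq_reindex_x; apply: tp2_eq_free_x => i Hi.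
  by have /sat_bigfand/(_ (Ordinal Hi)) := Hg'; rewrite /= pairseq_even pairseq_odd.
Qed.

Lemma open_src U : lopen (G0 T) U -> lopen (B0 T) (fun u => exists g, U g /\ src g = u).
Proof.
move=> [UG Ubasic]; split=> [_ [g [Ug <-]]|_ [g [Ug <-]]].
  by have [_ [_ [_ [+ _]]]] := G0_groupoid T; case/(_ g (UG g Ug)).
have [M [a [b [HM [Ea [Eb Eg]]]]]] := UG g Ug; subst g.
have [phi [Hphi HU]] := Ubasic _ Ug.
have [sigma Hsigma] := enumeration_factor a Eb.
exists (rename (reindex_x sigma) phi); split.
  by rewrite src_tp2 // tp2_rename pairseq_reindex_x Hsigma.
move=> _ /(B0_diag T) [M' [b' [HM' [Eb' ->]]]].
rewrite tp2_rename pairseq_reindex_x => Hphi'.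
pose a' i := if i < fbound phi then b' (sigma i) else b' (i - fbound phi).
have Ea' : enumeration a' := enumeration_prefix (b' \o sigma) (fbound phi) Eb'.
exists (tp2 M' a' b'); split; last by rewrite src_tp2.
apply: HU; first exact: G0_tp2.
by move: Hphi'; apply: tp2_eq_free_x => i Hi; rewrite /a' Hi.
Qed.

Lemma G0_open_topological_groupoid :
  is_open_topological_groupoid (G0 T) (B0 T) (tpmul T) (tpinv T).
Proof.
split; last exact: open_src.
split; first exact: G0_groupoid.
split; first exact: continuous_tpinv.
split; first exact: continuous_src.
split; first exact: continuous_tgt.
exact: continuous_tpmul.
Qed.

End Topology.

Definition entails {L : language} (T : theory L) (phi psi : formula L) : Prop :=
  forall M : structure L, is_model M T -> forall v : nat -> M, sat M v phi -> sat M v psi.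

Section HenkinModel.
Context {L : language} (T : theory L) (l : ftype L).
Hypothesis T_sentences : forall phi, T phi -> sentence phi.
Hypothesis l_neg : forall phi, l (fneg phi) <-> ~ l phi.
Hypothesis l_and : forall phi psi, l (fand phi psi) <-> l phi /\ l psi.
Hypothesis l_entails : forall phi psi, entails T phi psi -> l phi -> l psi.
(* Witnesses among the [x_i] and among the [y_i] make both halves of the canonical
   valuation of the term model enumerations. *)
Hypothesis l_witness : forall n psi, l (fex n psi) ->
  (exists i, l (rename (upd id n i.*2) psi)) /\ (exists j, l (rename (upd id n j.*2.+1) psi)).

Lemma l_true : l ftrue.
Proof.
by case: (classic (l ftrue)) => // /l_neg; apply: l_entails => M _ v _; apply: erefl.
Qed.

Lemma l_valid phi : entails T ftrue phi -> l phi.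
Proof. by move/l_entails; apply; apply: l_true. Qed.

Lemma l_entails2 phi psi chi :
  (forall M : structure L, is_model M T -> forall v : nat -> M,
     sat M v phi -> sat M v psi -> sat M v chi) ->
  l phi -> l psi -> l chi.
Proof.
move=> Himp Hphi Hpsi; apply: (l_entails (fand phi psi)); last by apply/l_and.
by move=> M HM v []; apply: Himp.
Qed.

Lemma l_equiv phi psi :
  (forall (M : structure L) (v : nat -> M), sat M v phi <-> sat M v psi) ->
  (l phi <-> l psi).
Proof. by move=> Heq; split; apply: l_entails => M _ v /Heq. Qed.

Lemma l_bigfand n (F : 'I_n -> formula L) : l (bigfand F) <-> forall i, l (F i).
Proof. exact: (bigfand_ind _ F l_true l_and). Qed.

Definition leqv i j : Prop := l (fequ (tvar i) (tvar j)).

Lemma leqv_refl i : leqv i i.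
Proof. by apply: l_valid. Qed.

Lemma leqv_sym {i j} : leqv i j -> leqv j i.
Proof. by apply: l_entails => M _ v /=. Qed.

Lemma leqv_trans {i j k} : leqv i j -> leqv j k -> leqv i k.
Proof. by apply: l_entails2 => M _ v /= -> ->. Qed.

Definition leqv_class (k : nat) : nat -> Prop := leqv^~ k.

Definition henkin_dom : Type := {X : nat -> Prop | exists k, X = leqv_class k}.

Definition cl (k : nat) : henkin_dom := exist _ (leqv_class k) (ex_intro _ k erefl).

Lemma cl_eq i j : cl i = cl j <-> leqv i j.
Proof.
split=> [/(f_equal (@proj1_sig _ _)) /(equal_f^~ i) /= Ei|Hij].
  by move: Ei; rewrite /leqv_class => <-; apply: leqv_refl.
suff Ecl : leqv_class i = leqv_class j.
  by apply: eq_exist_uncurried; exists Ecl; apply: proof_irrelevance.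
apply: functional_extensionality => k; apply: propositional_extensionality.
rewrite /leqv_class; split=> Hk.
- exact: leqv_trans Hk Hij.
- exact: leqv_trans Hk (leqv_sym Hij).
Qed.

Definition rep (d : henkin_dom) : nat :=
  proj1_sig (constructive_indefinite_description _ (proj2_sig d)).

Lemma repK d : cl (rep d) = d.
Proof.
rewrite /rep; case: (constructive_indefinite_description _ _) => k Ek.
case: d Ek => X HX /= Ek; subst X.
by apply: eq_exist_uncurried; exists erefl; apply: proof_irrelevance.
Qed.

Lemma l_name_term t :
  (exists i, l (fequ (tvar i.*2) t)) /\ (exists j, l (fequ (tvar j.*2.+1) t)).
Proof.
pose B := tbound t.
have teval_upd (M : structure L) (v : nat -> M) m : teval M (upd v B m) t = teval M v t.
  by apply: eq_teval_free => k /tbound_free Hk; rewrite /upd ltn_eqF.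
have Hex : l (fex B (fequ (tvar B) t)).
  by apply: l_valid => M _ v _ /=; exists (teval M v t); rewrite /upd eqxx teval_upd.
have named k : l (rename (upd id B k) (fequ (tvar B) t)) -> l (fequ (tvar k) t).
  by apply: l_entails => M _ v; rewrite sat_rename comp_upd /= teval_upd /upd eqxx.
by have [[i Hi] [j Hj]] := l_witness _ _ Hex; split; [exists i | exists j]; apply: named.
Qed.

Lemma l_name t : exists k, l (fequ (tvar k) t).
Proof. by have [[i Hi] _] := l_name_term t; exists i.*2. Qed.

Definition henkin_fint (f : fsym L) (ds : 'I_(far f) -> henkin_dom) : henkin_dom :=
  cl (proj1_sig (constructive_indefinite_description _
        (l_name (tapp f (fun i => tvar (rep (ds i))))))).

Lemma henkin_fintE f ds : exists w,
  henkin_fint f ds = cl w /\ l (fequ (tvar w) (tapp f (fun i => tvar (rep (ds i))))).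
Proof.
by rewrite /henkin_fint; case: (constructive_indefinite_description _ _) => w Hw; exists w.
Qed.

Definition henkin_model : structure L := {|
  dom := henkin_dom;
  dom_inh := cl 0;
  fint := henkin_fint;
  rint := fun r ds => l (frel r (fun i => tvar (rep (ds i)))) |}.

Lemma teval_henkin t : forall sigma k,
  teval henkin_model (cl \o sigma) t = cl k <-> l (fequ (tvar k) (trename sigma t)).
Proof.
elim: t => [n|f args IH] sigma k /=; first by rewrite cl_eq; split=> /leqv_sym.
set ds := fun i => teval henkin_model (cl \o sigma) (args i).
have [w [-> Hw]] := henkin_fintE f ds.
have Hargs : l (bigfand (fun i => fequ (tvar (rep (ds i))) (trename sigma (args i)))).
  by apply/l_bigfand => i; apply/IH; rewrite repK.
have Hwt : l (fequ (tvar w) (tapp f (fun i => trename sigma (args i)))).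
  move: Hargs Hw; apply: l_entails2 => M _ v /sat_bigfand /= Hi ->.
  by congr (fint M f); apply: functional_extensionality.
rewrite cl_eq; split=> Hk.
- by move: Hwt Hk; apply: l_entails2 => M _ v /= <- ->.
- by move: Hwt Hk; apply: l_entails2 => M _ v /= -> ->.
Qed.

Lemma l_rename_ex sigma n psi :
  (exists j, l (rename (upd sigma n j) psi)) <-> l (rename sigma (fex n psi)).
Proof.
have Hupd (M : structure L) (v : nat -> M) m :
    sat M (upd v (fresh sigma psi) m \o upd sigma n (fresh sigma psi)) psi
    <-> sat M (upd (v \o sigma) n m) psi.
  by apply: eq_sat_free => k; apply: upd_comp_fresh.
split=> [[j]|/l_witness [[i Hi] _]].
- apply: l_entails => M _ v; rewrite sat_rename comp_upd => Hj.
  by exists (v j); rewrite sat_rename Hupd.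
- by exists i.*2; move: Hi; apply: l_entails => M _ v /sat_rename_upd_fresh.
Qed.

Lemma sat_henkin phi : forall sigma,
  sat henkin_model (cl \o sigma) phi <-> l (rename sigma phi).
Proof.
elim: phi => [t1 t2|r args|psi IH|psi1 IH1 psi2 IH2|n psi IH] sigma /=.
- set d1 := teval _ _ t1; set d2 := teval _ _ t2.
  have H1 : l (fequ (tvar (rep d1)) (trename sigma t1)) by apply/teval_henkin; rewrite repK.
  have H2 : l (fequ (tvar (rep d2)) (trename sigma t2)) by apply/teval_henkin; rewrite repK.
  have H12 := proj2 (l_and _ _) (conj H1 H2).
  rewrite -(repK d1) -(repK d2) cl_eq; split.
  + by move: H12; apply: l_entails2 => M _ v /= [<- <-].
  + by move: H12; apply: l_entails2 => M _ v /= [-> ->].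
- pose ds i := teval henkin_model (cl \o sigma) (args i).
  have Hargs : l (bigfand (fun i => fequ (tvar (rep (ds i))) (trename sigma (args i)))).
    by apply/l_bigfand => i; apply/teval_henkin; rewrite repK.
  have Eargs (M : structure L) (v : nat -> M) : sat M v (bigfand
      (fun i => fequ (tvar (rep (ds i))) (trename sigma (args i)))) ->
      (fun i => v (rep (ds i))) = (fun i => teval M v (trename sigma (args i))).
    by move/sat_bigfand => Hi; apply: functional_extensionality.
  by split; move: Hargs; apply: l_entails2 => M _ v /Eargs /= ->.
- by rewrite l_neg IH.
- by rewrite l_and IH1 IH2.
- rewrite -l_rename_ex; split=> [[d]|[j]].
  + by rewrite -(repK d) -comp_upd IH; exists (rep d).
  + by rewrite -IH comp_upd; exists (cl j).
Qed.

Theorem henkin_G0 : G0 T l.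
Proof.
pose a i := cl i.*2; pose b j := cl j.*2.+1.
have Hab : pairseq a b = cl.
  by apply: functional_extensionality; apply: parity_ind => i; rewrite ?pairseq_even ?pairseq_odd.
have Hl phi : l phi <-> sat henkin_model cl phi.
  by rewrite -[cl]/(cl \o id) sat_henkin; apply: l_equiv => M v; rewrite sat_rename.
exists henkin_model, a, b; split; [|split; [|split]].
- move=> phi Tphi v; suff : sat henkin_model cl phi.
    by apply: (proj1 (eq_sat_free _ _ _ _ _)) => k /(T_sentences _ Tphi k).
  by apply/Hl/l_valid => M HM w _; apply: HM.
- move=> d; have [[i Hi] _] := l_name_term (tvar (rep d)).
  by exists i; rewrite -(repK d); apply/cl_eq.
- move=> d; have [_ [j Hj]] := l_name_term (tvar (rep d)).
  by exists j; rewrite -(repK d); apply/cl_eq.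
- apply: functional_extensionality => phi; apply: propositional_extensionality.
  by rewrite Hl /tp2 Hab.
Qed.

End HenkinModel.

Section Coding.
Context {L : language} (ef : fsym L -> nat) (er : rsym L -> nat).
Hypotheses (ef_inj : injective ef) (er_inj : injective er).

Fixpoint tcode (t : term L) : GenTree.tree nat :=
  match t with
  | tvar n => GenTree.Node 0 [:: GenTree.Leaf n]
  | tapp f args => GenTree.Node 1
      (GenTree.Leaf (ef f) :: [seq tcode (args i) | i <- enum 'I_(far f)])
  end.

Fixpoint fcode (phi : formula L) : GenTree.tree nat :=
  match phi with
  | fequ t1 t2 => GenTree.Node 2 [:: tcode t1; tcode t2]
  | frel r args => GenTree.Node 3
      (GenTree.Leaf (er r) :: [seq tcode (args i) | i <- enum 'I_(rar r)])
  | fneg psi => GenTree.Node 4 [:: fcode psi]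
  | fand psi chi => GenTree.Node 5 [:: fcode psi; fcode chi]
  | fex n psi => GenTree.Node 6 [:: GenTree.Leaf n; fcode psi]
  end.

Lemma eq_args_map {n} (F G : 'I_n -> term L) :
  [seq tcode (F i) | i <- enum 'I_n] = [seq tcode (G i) | i <- enum 'I_n] ->
  (forall i, tcode (F i) = tcode (G i) -> F i = G i) -> F = G.
Proof.
move=> /eq_in_map Heq Hinj; apply: functional_extensionality => i.
by apply: Hinj; apply: Heq; rewrite mem_enum.
Qed.

Lemma tcode_inj : injective tcode.
Proof.
elim=> [n|f args IH] [n'|f' args'] //=; first by case=> ->.
case=> /ef_inj Ef; subst f' => Eargs.
by congr (tapp f); apply: eq_args_map Eargs _ => i; apply: IH.
Qed.

Lemma fcode_inj : injective fcode.
Proof.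
elim=> [t1 t2|r args|psi IH|psi1 IH1 psi2 IH2|n psi IH]
       [t1' t2'|r' args'|psi'|psi1' psi2'|n' psi'] //=.
- by case=> /tcode_inj -> /tcode_inj ->.
- case=> /er_inj Er; subst r' => Eargs.
  by congr (frel r); apply: eq_args_map Eargs _ => i; apply: tcode_inj.
- by case=> /IH ->.
- by case=> /IH1 -> /IH2 ->.
- by case=> -> /IH ->.
Qed.

End Coding.

Lemma countable_formulas {L : language} : countable_language L ->
  exists (e : nat -> formula L) (c : formula L -> nat), cancel c e.
Proof.
move=> [[ef ef_inj] [er er_inj]].
pose c phi := pickle (fcode ef er phi).
have c_inj : injective c.
  by move=> phi psi /(pcan_inj pickleK); apply: fcode_inj.
exists (fun n => epsilon (inhabits ftrue) (fun phi => c phi = n)), c => phi.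
by apply: c_inj; apply: (epsilon_spec (inhabits ftrue) (fun psi => c psi = c phi)); exists phi.
Qed.

Definition least (P : nat -> Prop) : nat :=
  epsilon (inhabits 0) (fun n => P n /\ forall j, P j -> n <= j).

Lemma leastP {P : nat -> Prop} {n} : P n -> P (least P) /\ forall j, P j -> least P <= j.
Proof.
move=> Pn; apply: (epsilon_spec (inhabits 0) (fun n => P n /\ forall j, P j -> n <= j)).
have [m [[Pm Hmin] _]] := dec_inh_nat_subset_has_unique_least_element P
  (fun n => classic (P n)) (ex_intro _ n Pn).
by exists m; split=> // j /Hmin /leP.
Qed.

Lemma least_unique (P : nat -> Prop) n :
  P n -> (forall j, P j -> n <= j) -> least P = n.
Proof.
move=> Pn Hmin; have [Pl Hl] := leastP Pn.
by apply/eqP; rewrite eqn_leq Hl // Hmin.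
Qed.

Section DownwardLS.
Context {L : language} (T : theory L) (e : nat -> formula L) (c : formula L -> nat).
Hypotheses (eK : cancel c e) (T_sentences : forall phi, T phi -> sentence phi).
Context (M : structure L) (M_model : is_model M T).

Notation m0 := (dom_inh L M).

(* Step [k] realises the existential formula coded by the first Cantor coordinate of [k./2];
   the second coordinate makes every formula recur at arbitrarily late steps of both parities. *)
Definition ls_step (k : nat) (u : nat -> M) : M :=
  if e (Cantor.of_nat k./2).1 is fex n psi
  then epsilon (inhabits m0) (fun m => sat M (upd u n m) psi)
  else m0.

Fixpoint ls_prefix (k : nat) : seq M :=
  if k is k'.+1 then rcons (ls_prefix k') (ls_step k' (nth m0 (ls_prefix k'))) else [::].

Definition ls_val (k : nat) : M := nth m0 (ls_prefix k.+1) k.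

Lemma size_ls_prefix k : size (ls_prefix k) = k.
Proof. by elim: k => //= k IH; rewrite size_rcons IH. Qed.

Lemma nth_ls_prefix k j : j < k -> nth m0 (ls_prefix k) j = ls_val j.
Proof.
elim: k => // k IH; rewrite ltnS leq_eqVlt => /orP [/eqP ->|Hj] //.
by rewrite /= nth_rcons size_ls_prefix Hj IH.
Qed.

Lemma ls_valE k : ls_val k = ls_step k (nth m0 (ls_prefix k)).
Proof. by rewrite /ls_val /= nth_rcons size_ls_prefix ltnn eqxx. Qed.

Lemma ls_witness n psi k :
  fbound psi <= k -> (Cantor.of_nat k./2).1 = c (fex n psi) ->
  sat M ls_val (fex n psi) -> sat M ls_val (rename (upd id n k) psi).
Proof.
move=> Hk Hcode Hex; pose u := nth m0 (ls_prefix k).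
have agree j : ffree j psi -> u j = ls_val j.
  by move=> /fbound_free Hj; apply: nth_ls_prefix; apply: leq_trans Hk.
have Hu : sat M (upd u n (ls_val k)) psi.
  rewrite ls_valE /ls_step Hcode eK.
  apply: (epsilon_spec (inhabits m0) (fun m => sat M (upd u n m) psi)).
  change (sat M u (fex n psi)).
  by move: Hex; apply: (proj1 (eq_sat_free _ _ _ _ _)) => j [_ /agree].
rewrite sat_rename comp_upd; move: Hu; apply: (proj1 (eq_sat_free _ _ _ _ _)) => j Hj.
by rewrite /upd /=; case: eqP => // _; rewrite agree.
Qed.

Lemma G0_nonempty : exists p, G0 T p.
Proof.
exists (sat M ls_val); apply: henkin_G0 => // [phi psi Himp|n psi Hex].
  exact: Himp M M_model ls_val.
pose h := Cantor.to_nat (c (fex n psi), fbound psi).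
have Hh : fbound psi <= h by have := to_nat_non_decreasing (c (fex n psi)) (fbound psi); lia.
have Hcode : Cantor.of_nat h = (c (fex n psi), fbound psi) by apply: cancel_of_to.
split; [exists h | exists h]; apply: ls_witness Hex.
- by rewrite -addnn; lia.
- by rewrite doubleK Hcode.
- by rewrite -addnn; lia.
- by rewrite /= uphalf_double Hcode.
Qed.

End DownwardLS.

Lemma Rinv_succ_gt0 n : (0 < / INR n.+1)%R.
Proof. by apply: Rinv_0_lt_compat; apply: lt_0_INR; apply/ltP. Qed.

Lemma Rinv_succ_le {m n} : m <= n -> (/ INR n.+1 <= / INR m.+1)%R.
Proof.
move=> Hmn; apply: Rinv_le_contravar; first by apply: lt_0_INR; apply/ltP.
by apply: le_INR; apply/leP.
Qed.

Lemma Rinv_succ_lt {m n} : m < n -> (/ INR n.+1 < / INR m.+1)%R.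
Proof.
move=> Hmn; apply: Rinv_lt_contravar; last by apply: lt_INR; apply/ltP.
by apply: Rmult_lt_0_compat; apply: lt_0_INR; apply/ltP.
Qed.

Lemma Rinv_succ_small {eps} : (0 < eps)%R -> exists K, (/ INR K.+1 < eps)%R.
Proof.
move=> Heps; have [N [HN /ltP N_gt0]] := archimed_cor1 eps Heps.
by exists N.-1; rewrite prednK.
Qed.

Section G0Connectives.
Context {L : language} {T : theory L} {g : ftype L} (Gg : G0 T g).

Lemma G0_neg phi : g (fneg phi) <-> ~ g phi.
Proof. by case: Gg => M [a [b [_ [_ [_ ->]]]]]. Qed.

Lemma G0_and phi psi : g (fand phi psi) <-> g phi /\ g psi.
Proof. by case: Gg => M [a [b [_ [_ [_ ->]]]]]. Qed.

Lemma G0_imp phi psi : g (fimp phi psi) <-> (g phi -> g psi).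
Proof.
rewrite G0_neg G0_and G0_neg; split=> [Hn Hphi|Himp [/Himp]//].
by apply: NNPP => Hpsi; apply: Hn.
Qed.

Lemma G0_bigfand n (F : 'I_n -> formula L) : g (bigfand F) <-> forall i, g (F i).
Proof. by case: Gg => M [a [b [_ [_ [_ ->]]]]]; apply: sat_bigfand. Qed.

Lemma G0_entails phi psi : entails T phi psi -> g phi -> g psi.
Proof. by case: Gg => M [a [b [HM [_ [_ ->]]]]] Himp; apply: Himp. Qed.

End G0Connectives.

Section Metric.
Context {L : language} (T : theory L) (e : nat -> formula L) (c : formula L -> nat).
Hypotheses (eK : cancel c e) (T_sentences : forall phi, T phi -> sentence phi).
Implicit Types (g h k p q : ftype L) (phi psi : formula L).

(* Requirement [n] asks for a witness of [e n./2], when it is existential, among the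
   [x_i] if [n] is even and among the [y_i] if [n] is odd. *)
Definition req_witness n i : formula L :=
  if e n./2 is fex m psi then rename (upd id m (i.*2 + odd n)) psi else e n./2.

Definition witnesses g n i : Prop := g (e n./2) -> g (req_witness n i).

Definition least_witness g n : nat := least (witnesses g n).

(* Recording least witnesses, and not only formulas, is what makes the metric complete:
   along a Cauchy sequence the witnesses stabilise, so the limit type is realised. *)
Definition differ g h n : Prop :=
  ~ (g (e n) <-> h (e n)) \/ least_witness g n <> least_witness h n.

Definition tdist g h : R :=
  if excluded_middle_informative (exists n, differ g h n)
  then (/ INR (least (differ g h)).+1)%R else 0%R.

Lemma witnesses_exist g n : G0 T g -> exists i, witnesses g n i.
Proof.
case=> M [a [b [_ [Ea [Eb ->]]]]]; rewrite /witnesses /req_witness.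
case: (e n./2) => [t1 t2|r args|psi|psi chi|m psi]; try by exists 0.
case: (classic (tp2 M a b (fex m psi))) => [[x Hx]|Hnot]; last by exists 0.
have [i Hi] : exists i, pairseq a b (i.*2 + odd n) = x.
  case: (odd n); [have [i <-] := Eb x | have [i <-] := Ea x]; exists i.
  - by rewrite addn1 pairseq_odd.
  - by rewrite addn0 pairseq_even.
by exists i => _; rewrite /tp2 sat_rename comp_upd Hi.
Qed.

Lemma least_witnessP g n : G0 T g ->
  witnesses g n (least_witness g n) /\ forall j, witnesses g n j -> least_witness g n <= j.
Proof. by move/(witnesses_exist g n) => [i /leastP]. Qed.

Lemma tdist_differ {g h n} : differ g h n -> tdist g h = (/ INR (least (differ g h)).+1)%R.
Proof. by move=> Hn; rewrite /tdist; case: excluded_middle_informative => // -[]; exists n. Qed.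

Lemma tdist_agree g h : (forall n, ~ differ g h n) -> tdist g h = 0%R.
Proof.
by move=> Hn; rewrite /tdist; case: excluded_middle_informative => // -[n Hdiff]; case: (Hn n).
Qed.

Lemma tdist_ge0 g h : (0 <= tdist g h)%R.
Proof.
case: (classic (exists n, differ g h n)) => [[n Hn]|Hnone].
  by rewrite (tdist_differ Hn); apply/Rlt_le/Rinv_succ_gt0.
by rewrite tdist_agree => [|n Hn]; [apply: Rle_refl | apply: Hnone; exists n].
Qed.

Lemma tdist_ge {g h n} : differ g h n -> (/ INR n.+1 <= tdist g h)%R.
Proof. by move=> Hn; rewrite (tdist_differ Hn); apply/Rinv_succ_le/(leastP Hn).2. Qed.

Lemma tdist_lt g h K :
  (tdist g h < / INR K.+1)%R <-> forall n, n <= K -> ~ differ g h n.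
Proof.
split=> [Hlt n HnK /tdist_ge Hge|Hagree].
  by have := Rinv_succ_le HnK; lra.
case: (classic (exists n, differ g h n)) => [[n Hn]|Hnone].
  rewrite (tdist_differ Hn); apply: Rinv_succ_lt; rewrite ltnNge.
  by apply/negP => /Hagree; apply; apply: (leastP Hn).1.
by rewrite tdist_agree => [|n Hn]; [apply: Rinv_succ_gt0 | apply: Hnone; exists n].
Qed.

Lemma differ_comm g h : differ g h = differ h g.
Proof.
apply: functional_extensionality => n; apply: propositional_extensionality.
by rewrite /differ; split=> -[Hn|Hn]; [left|right|left|right] => H; apply: Hn;
  [apply: iff_sym | | apply: iff_sym |].
Qed.

Lemma tdist_sym g h : tdist g h = tdist h g.
Proof. by rewrite /tdist differ_comm. Qed.

Lemma differ_split {g k n} h : differ g k n -> differ g h n \/ differ h k n.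
Proof.
move=> Hgk; apply: NNPP => /not_or_and [Hgh Hhk].
have [Egh Wgh] : (g (e n) <-> h (e n)) /\ least_witness g n = least_witness h n.
  by split; apply: NNPP => H; apply: Hgh; [left|right].
have [Ehk Whk] : (h (e n) <-> k (e n)) /\ least_witness h n = least_witness k n.
  by split; apply: NNPP => H; apply: Hhk; [left|right].
by case: Hgk; apply; [apply: iff_trans Egh Ehk | rewrite Wgh Whk].
Qed.

Lemma tdist_triangle g h k : (tdist g k <= tdist g h + tdist h k)%R.
Proof.
have := tdist_ge0 g h; have := tdist_ge0 h k; move=> Hhk Hgh.
case: (classic (exists n, differ g k n)) => [[n Hn]|Hnone]; last first.
  by rewrite tdist_agree => [|n Hn]; [lra | apply: Hnone; exists n].
rewrite (tdist_differ Hn); have [Hleast _] := leastP Hn.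
by case: (differ_split h Hleast) => /tdist_ge; lra.
Qed.

Lemma tdist_eq0 g h : tdist g h = 0%R <-> g = h.
Proof.
split=> [H0|<-]; last by apply: tdist_agree => n [] [].
apply: functional_extensionality => phi; apply: propositional_extensionality.
rewrite -(eK phi); apply: NNPP => Hn.
by have := tdist_ge (or_introl Hn); have := Rinv_succ_gt0 (c phi); lra.
Qed.

Lemma tdist_metric : metric_on (G0 T) tdist.
Proof.
split; first by move=> *; apply: tdist_ge0.
split; first by move=> *; apply: tdist_eq0.
split; first by move=> *; apply: tdist_sym.
by move=> *; apply: tdist_triangle.
Qed.

Lemma lopen_metric_open U : lopen (G0 T) U -> metric_open (G0 T) tdist U.
Proof.
move=> [UG Ubasic]; split=> // p Up; have [phi [Hphi HU]] := Ubasic p Up.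
exists (/ INR (c phi).+1)%R; split=> [|q Gq /tdist_lt /(_ (c phi) (leqnn _)) Hsame].
  exact: Rinv_succ_gt0.
apply: HU => //; rewrite -(eK phi); apply: NNPP => Hq; apply: Hsame; left => Hiff.
by apply/Hq/Hiff; rewrite eK.
Qed.

Definition literal p n : formula L :=
  if excluded_middle_informative (p (e n)) then e n else fneg (e n).

Lemma literalP p n : G0 T p -> p (literal p n).
Proof.
by move=> Gp; rewrite /literal; case: excluded_middle_informative => [//|Hp]; apply/(G0_neg Gp).
Qed.

Lemma G0_literal p q n : G0 T p -> G0 T q -> q (literal p n) -> (p (e n) <-> q (e n)).
Proof.
move=> Gp Gq; rewrite /literal; case: excluded_middle_informative => Hp; first by split.
by rewrite (G0_neg Gq); split.
Qed.

Definition is_least_witness n i : formula L :=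
  fand (fimp (e n./2) (req_witness n i))
       (bigfand (fun j : 'I_i => fneg (fimp (e n./2) (req_witness n j)))).

Lemma G0_is_least_witness {g} n i : G0 T g ->
  g (is_least_witness n i) <-> least_witness g n = i.
Proof.
move=> Gg; rewrite (G0_and Gg) (G0_imp Gg) (G0_bigfand Gg).
split=> [[Hi Hlt]|<-].
- apply: least_unique => // j Hj; rewrite leqNgt; apply/negP => Hji.
  by have := Hlt (Ordinal Hji); rewrite (G0_neg Gg) (G0_imp Gg).
- have [Hw Hmin] := least_witnessP g n Gg; split=> // j.
  by rewrite (G0_neg Gg) (G0_imp Gg) => /Hmin; rewrite leqNgt ltn_ord.
Qed.

Lemma metric_open_lopen U : metric_open (G0 T) tdist U -> lopen (G0 T) U.
Proof.
move=> [UG Uball]; split=> // p Up; have Gp := UG p Up.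
have [eps [Heps Hball]] := Uball p Up; have [K HK] := Rinv_succ_small Heps.
exists (bigfand (fun n : 'I_K.+1 =>
  fand (literal p n) (is_least_witness n (least_witness p n)))); split.
  apply/(G0_bigfand Gp) => n; apply/(G0_and Gp).
  by split; [apply: literalP | apply/(G0_is_least_witness _ _ Gp)].
move=> q Gq /(G0_bigfand Gq) Hq; apply: Hball => //; apply: Rlt_trans HK.
apply/tdist_lt => n HnK.
have /(G0_and Gq) [Hlit /(G0_is_least_witness _ _ Gq) Hw] := Hq (Ordinal (HnK : n < K.+1)).
by case; [apply; apply: G0_literal | rewrite Hw].
Qed.

Section Completeness.
Variable x : nat -> ftype L.
Hypotheses (x_G0 : forall m, G0 T (x m)) (x_cauchy : cauchy tdist x).

Lemma cauchy_differ n :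
  exists N, forall m m', N <= m -> N <= m' -> ~ differ (x m) (x m') n.
Proof.
have [N HN] := x_cauchy _ (Rinv_succ_gt0 n); exists N => m m' Hm Hm'.
exact: (proj1 (tdist_lt _ _ n) (HN m m' Hm Hm')) n (leqnn n).
Qed.

Definition tlim : ftype L := fun phi => exists N, forall m, N <= m -> x m phi.

Lemma eventually_decided phi :
  exists N, (forall m, N <= m -> x m phi) \/ (forall m, N <= m -> ~ x m phi).
Proof.
have [N HN] := cauchy_differ (c phi); exists N.
have same m : N <= m -> (x N phi <-> x m phi).
  move=> Hm; rewrite -(eK phi); apply: NNPP => Hn.
  by apply: (HN N m (leqnn N) Hm); left.
by case: (classic (x N phi)) => H; [left|right] => m /same Hm; [apply/Hm | move/Hm].
Qed.

Lemma tlimN phi : ~ tlim phi <-> exists N, forall m, N <= m -> ~ x m phi.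
Proof.
split=> [Hn|[N HN] [N' HN']].
  by have [N [HN|HN]] := eventually_decided phi; [case: Hn; exists N | exists N].
by apply: (HN (maxn N N')); [apply: leq_maxl | apply/HN'/leq_maxr].
Qed.

Lemma tlim_neg phi : tlim (fneg phi) <-> ~ tlim phi.
Proof.
rewrite tlimN; split=> -[N HN]; exists N => m /HN; by rewrite (G0_neg (x_G0 m)).
Qed.

Lemma tlim_and phi psi : tlim (fand phi psi) <-> tlim phi /\ tlim psi.
Proof.
split=> [[N HN]|[[N1 H1] [N2 H2]]].
  by split; exists N => m /HN /(G0_and (x_G0 m)) [].
exists (maxn N1 N2) => m; rewrite geq_max => /andP [Hm1 Hm2].
by apply/(G0_and (x_G0 m)); split; [apply: H1 | apply: H2].
Qed.

Lemma tlim_entails phi psi : entails T phi psi -> tlim phi -> tlim psi.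
Proof. by move=> Himp [N HN]; exists N => m /HN; apply: G0_entails. Qed.

Lemma tlim_least_witness n : exists w, least_witness tlim n = w /\ witnesses tlim n w /\
  exists N, forall m, N <= m -> least_witness (x m) n = w.
Proof.
have [N HN] := cauchy_differ n; pose w := least_witness (x N) n.
have Ew m : N <= m -> least_witness (x m) n = w.
  by move=> Hm; apply: NNPP => Hn; apply: (HN m N Hm (leqnn N)); right.
have Hw : witnesses tlim n w.
  move=> [Na Ha]; exists (maxn N Na) => m; rewrite geq_max => /andP [Hm Hma].
  by have [+ _] := least_witnessP (x m) n (x_G0 m); rewrite Ew //; apply; apply: Ha.
exists w; split; last by split=> //; exists N.
apply: least_unique => // j Hj; rewrite leqNgt; apply/negP => Hjw.
have no_wit m : N <= m -> x m (e n./2) /\ ~ x m (req_witness n j).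
  move=> Hm; have [_ Hmin] := least_witnessP (x m) n (x_G0 m).
  have Hnw : ~ witnesses (x m) n j by move/Hmin; rewrite Ew // leqNgt Hjw.
  by split=> [|Hr]; [apply: NNPP => He; apply: Hnw | apply: Hnw].
have Hr : tlim (req_witness n j) := Hj (ex_intro _ N (fun m Hm => (no_wit m Hm).1)).
by move: Hr; apply/tlimN; exists N => m /no_wit [].
Qed.

Lemma eventually_agree n : exists N, forall m, N <= m -> ~ differ (x m) tlim n.
Proof.
have [w [Ew [_ [N1 HN1]]]] := tlim_least_witness n.
have [N2 HN2] := eventually_decided (e n).
exists (maxn N1 N2) => m; rewrite geq_max => /andP [Hm1 Hm2].
case; apply; last by rewrite Ew HN1.
case: HN2 => HN2; first by split=> _; [exists N2 | apply: HN2].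
have /tlimN Hlim : exists N, forall m, N <= m -> ~ x m (e n) by exists N2.
by split=> [/(HN2 m Hm2)|/Hlim].
Qed.

Lemma eventually_agree_upto K :
  exists N, forall m, N <= m -> forall n, n <= K -> ~ differ (x m) tlim n.
Proof.
elim: K => [|K [N HN]].
  by have [N HN] := eventually_agree 0; exists N => m Hm n; rewrite leqn0 => /eqP ->; apply: HN.
have [N' HN'] := eventually_agree K.+1; exists (maxn N N') => m.
rewrite geq_max => /andP [Hm Hm'] n; rewrite leq_eqVlt => /orP [/eqP ->|]; first exact: HN'.
exact: HN.
Qed.

Lemma tlim_G0 : G0 T tlim.
Proof.
apply: henkin_G0 T_sentences tlim_neg tlim_and tlim_entails _ => m psi Hex.
have wit (b : bool) : exists i, tlim (rename (upd id m (i.*2 + b)) psi).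
  pose n := b + (c (fex m psi)).*2.
  have [w [_ [Hw _]]] := tlim_least_witness n; exists w.
  move: Hw; rewrite /witnesses /req_witness /n half_bit_double eK oddD odd_double addbF oddb.
  by case: b {n} => /=; apply.
have [i Hi] := wit false; have [j Hj] := wit true.
by split; [exists i; rewrite -[i.*2]addn0 | exists j; rewrite -addn1].
Qed.

Lemma tlim_converges : converges_to tdist x tlim.
Proof.
move=> eps /Rinv_succ_small [K HK]; have [N HN] := eventually_agree_upto K.
by exists N => m Hm; apply: Rlt_trans HK; apply/tdist_lt; apply: HN.
Qed.

End Completeness.

Lemma G0_separable p0 : G0 T p0 -> exists s : nat -> ftype L,
  (forall n, G0 T (s n)) /\ forall U, lopen (G0 T) U -> (exists p, U p) -> exists n, U (s n).
Proof.
move=> Gp0; pose P n q := G0 T q /\ (q (e n) \/ ~ exists q', G0 T q' /\ q' (e n)).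
have Ps n : P n (epsilon (inhabits p0) (P n)).
  apply: epsilon_spec; case: (classic (exists q, G0 T q /\ q (e n))) => [[q [Gq Hq]]|Hnone].
  - by exists q; split=> //; left.
  - by exists p0; split=> //; right.
exists (fun n => epsilon (inhabits p0) (P n)); split=> [n|U [UG Ubasic] [p Up]].
  by have [] := Ps n.
have [phi [Hphi HU]] := Ubasic p Up; exists (c phi).
have [Gs [|[]]] := Ps (c phi); rewrite eK; first exact: HU.
by exists p; split=> //; apply: UG.
Qed.

Theorem G0_polish : (exists p, G0 T p) -> polish (G0 T).
Proof.
move=> [p0 Gp0]; split; last exact: G0_separable Gp0.
exists tdist; split; first exact: tdist_metric.
split=> [U|y Gy Cy]; first by split; [apply: lopen_metric_open | apply: metric_open_lopen].
by exists (tlim y); split; [apply: tlim_G0 | apply: tlim_converges].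
Qed.

End Metric.

Theorem lemma2p2 (L : language) (T : theory L)
  (hL : countable_language L) (hT : complete_theory T) :
  exists (mul : ftype L -> ftype L -> ftype L) (inv : ftype L -> ftype L),
    (* composition: tp(a,b) . tp(b,c) = tp(a,c) *)
    (forall (M : structure L) (a b c : nat -> M), is_model M T ->
       enumeration a -> enumeration b -> enumeration c ->
       mul (tp2 M a b) (tp2 M b c) = tp2 M a c) /\
    (* inverse: tp(a,b)^{-1} = tp(b,a) *)
    (forall (M : structure L) (a b : nat -> M), is_model M T ->
       enumeration a -> enumeration b -> inv (tp2 M a b) = tp2 M b a) /\
    (* every composable pair is of the form (tp(a,b), tp(b,c)) *)
    (forall g h, composable (G0 T) mul inv g h ->
       exists (M : structure L) (a b c : nat -> M), is_model M T /\
         enumeration a /\ enumeration b /\ enumeration c /\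
         g = tp2 M a b /\ h = tp2 M b c) /\
    is_open_topological_groupoid (G0 T) (B0 T) mul inv /\
    polish (G0 T) /\
    (forall (M : structure L) (a b : nat -> M), is_model M T ->
       enumeration a -> enumeration b ->
       tgt mul inv (tp2 M a b) = tp2 M a a /\ src mul inv (tp2 M a b) = tp2 M b b).
Proof.
have [e [c eK]] := countable_formulas hL.
case: hT => [T_sentences [[M M_model] _]].
exists (tpmul T), (tpinv T).
split; first exact: tpmul_tp2.
split; first exact: tpinv_tp2.
split; first by move=> g h; apply: composable_tp2.
split; first exact: G0_open_topological_groupoid.
split; first exact: G0_polish _ _ _ eK T_sentences (G0_nonempty _ _ _ eK T_sentences _ M_model).
by move=> M' a b HM' Ea Eb; rewrite tgt_tp2 // src_tp2.
Qed.
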